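(* Let $Y$ and $X$ be real-valued square integrable random variables on a common probability space, and let $\mathcal{H}_0=\{\delta(X)\in L^2:\ \delta:\mathbb{R}\to\mathbb{R}\text{ measurable},\ E[\delta(X)]=0\}$. Then $$\iota_X(Y)=\sup_{\delta(X)\in\mathcal{H}_0}\frac{E[Y\delta(X)]}{\operatorname{SD}[\delta(X)]}=\sup_{\delta(X)\in\mathcal{H}_0,\ \delta(X)\ge -1}\frac{E[Y\delta(X)]}{\operatorname{SD}[\delta(X)]},$$ where both suprema range over those $\delta(X)$ with $\operatorname{SD}[\delta(X)]>0$.
   Context: The mean impact of $X$ on $Y$ is $\iota_X(Y)=\sup\{E[Y\delta(X)]:\ \delta\text{ measurable},\ \delta(X)\in L^2,\ E[\delta(X)]=0,\ E[\delta^2(X)]=1\}$. $\operatorname{SD}$ denotes standard deviation. *)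

From HB Require Import structures.
From mathcomp Require Import all_boot all_order all_algebra.
From mathcomp Require Import all_classical all_reals all_analysis.
Set Implicit Arguments. Unset Strict Implicit. Unset Printing Implicit Defensive.
Import Order.TTheory GRing.Theory Num.Theory.
Local Open Scope classical_set_scope.
Local Open Scope ring_scope.

Section MeanImpact.
Context (d : measure_display) (T : measurableType d) (R : realType)
        (P : probability T R).

Definition sq_integrable (f : T -> R) : Prop :=
  measurable_fun setT f /\ P.-integrable setT (fun t => (f t ^+ 2)%:E).

(* expectation (real-valued; used only for integrable functions) *)
Definition Ex (f : T -> R) : R := Rintegral P setT f.

Definition SD (f : T -> R) : R :=
  Num.sqrt (Ex (fun t => (f t - Ex f) ^+ 2)).

Definition H0 (X : T -> R) (delta : R -> R) : Prop :=
  measurable_fun setT delta /\ sq_integrable (delta \o X) /\ Ex (delta \o X) = 0.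

Definition mean_impact (X Y : T -> R) : \bar R :=
  ereal_sup [set (Ex (fun t => Y t * delta (X t)))%:E | delta in
    [set delta | H0 X delta /\ Ex (fun t => delta (X t) ^+ 2) = 1]].

End MeanImpact.

From HB Require Import structures.
From mathcomp Require Import all_boot all_order all_algebra.
From mathcomp Require Import all_classical all_reals all_analysis.
From mathcomp Require Import ring lra measurable_realfun.
Import Order.TTheory GRing.Theory Num.Theory numFieldNormedType.Exports.
Local Open Scope classical_set_scope.
Local Open Scope ring_scope.
Set Implicit Arguments. Unset Strict Implicit.

(* The ratio E[Y δ(X)] / SD[δ(X)] is invariant under positive rescaling of δ,
   and δ / SD[δ(X)] satisfies the constraint E[δ(X)^2] = 1 of the mean impact;
   this gives the first equality.  For the second, a centred δ(X) is
   approximated by the recentred truncations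
     δ_n = max(δ, -(n+1)) - m_n,   m_n = E[max(δ(X), -(n+1)) - δ(X)] >= 0,
   which are bounded below by -(n + 1 + m_n), hence >= -1 after division by
   n + 1 + m_n.  Dominated convergence gives E[Y δ_n(X)] -> E[Y δ(X)] and
   E[δ_n(X)^2] -> E[δ(X)^2], so the ratios of the rescaled truncations tend
   to the ratio of δ. *)

Lemma normM_le_sqrD (R : realDomainType) (a b : R) : `|a * b| <= a ^+ 2 + b ^+ 2.
Proof.
have := sqr_ge0 (a - b); have := sqr_ge0 (a + b); rewrite sqrrB sqrrD.
by have [ab0|ab0] := leP 0 (a * b); [rewrite ger0_norm|rewrite ltr0_norm]; lra.
Qed.

Lemma norm_le_1Dsqr (R : realDomainType) (a : R) : `|a| <= 1 + a ^+ 2.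
Proof. by have [a0|a0] := leP 0 a; [rewrite ger0_norm|rewrite ltr0_norm]; nra. Qed.

Lemma ereal_sup_le_approx (R : realType) (I : Type) (A B : set I) (r : I -> R) :
  (forall i e, A i -> 0 < e -> exists2 j, B j & r i - e < r j) ->
  (ereal_sup [set (r i)%:E | i in A] <= ereal_sup [set (r j)%:E | j in B])%E.
Proof.
move=> approx; apply: ge_ereal_sup => _ [i Ai <-].
apply/lee_addgt0Pr => e e0; have [j Bj lt_ij] := approx i e Ai e0.
apply: (@le_trans _ _ ((r j)%:E + e%:E)).
  by rewrite -EFinD lee_fin -lerBlDr ltW.
by rewrite leeD2r //; apply: ereal_sup_ubound; exists j.
Qed.

Section SquareIntegrable.
Context (d : measure_display) (T : measurableType d) (R : realType)
        (P : probability T R).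
Local Notation L1 f := (P.-integrable setT (EFin \o f)).
Local Notation L2 := (sq_integrable P).

Lemma EFin_integrableD (f g : T -> R) : L1 f -> L1 g -> L1 (fun x => f x + g x).
Proof. by move=> Lf Lg; apply: eq_integrable (integrableD _ Lf Lg). Qed.

Lemma EFin_integrableZ (k : R) (f : T -> R) : L1 f -> L1 (fun x => k * f x).
Proof. by move=> Lf; apply: eq_integrable (integrableZl _ k Lf). Qed.

Lemma EFin_integrable_cst (k : R) : L1 (fun _ => k).
Proof. exact: finite_measure_integrable_cst. Qed.

Lemma EFin_integrable_le (f g : T -> R) : measurable_fun setT f ->
  (forall x, `|f x| <= `|g x|) -> L1 g -> L1 f.
Proof.
move=> mf fg; apply: le_integrable => //; first exact/measurable_EFinP.
by move=> x _ /=; rewrite lee_fin.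
Qed.

Lemma sq_integrable_integrable (f : T -> R) : L2 f -> L1 f.
Proof.
move=> [mf Lf2]; apply: (EFin_integrable_le (g := fun x => 1 + f x ^+ 2)) => //.
  by move=> x; rewrite [X in _ <= X]ger0_norm ?addr_ge0 ?sqr_ge0 ?norm_le_1Dsqr.
exact: EFin_integrableD (EFin_integrable_cst 1) Lf2.
Qed.

Lemma sq_integrableM_integrable (f g : T -> R) : L2 f -> L2 g ->
  L1 (fun x => f x * g x).
Proof.
move=> [mf Lf2] [mg Lg2].
apply: (EFin_integrable_le (g := fun x => f x ^+ 2 + g x ^+ 2)).
- exact: measurable_funM.
- by move=> x; rewrite [X in _ <= X]ger0_norm ?addr_ge0 ?sqr_ge0 ?normM_le_sqrD.
- exact: EFin_integrableD.
Qed.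

Lemma sq_integrable_cst (k : R) : L2 (fun _ => k).
Proof. by split => //; exact: EFin_integrable_cst. Qed.

Lemma sq_integrableD (f g : T -> R) : L2 f -> L2 g -> L2 (fun x => f x + g x).
Proof.
move=> Lf Lg; split; first exact: measurable_funD Lf.1 Lg.1.
apply: eq_integrable
  (EFin_integrableD Lf.2 (EFin_integrableD (EFin_integrableZ 2
     (sq_integrableM_integrable Lf Lg)) Lg.2)) => // x _.
by congr EFin; rewrite sqrrD -[_ *+ 2]mulr_natl; ring.
Qed.

Lemma sq_integrableZ (k : R) (f : T -> R) : L2 f -> L2 (fun x => k * f x).
Proof.
move=> Lf; split; first exact: measurable_funM Lf.1.
by apply: eq_integrable (EFin_integrableZ (k ^+ 2) Lf.2) => // x _; rewrite /= exprMn.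
Qed.

Lemma sq_integrable_le (f g : T -> R) : measurable_fun setT f ->
  (forall x, `|f x| <= `|g x|) -> L2 g -> L2 f.
Proof.
move=> mf fg Lg; split => //; apply: (EFin_integrable_le _ _ Lg.2).
  exact: measurable_funX.
by move=> x; rewrite !normrX lerXn2r ?nnegrE.
Qed.

Lemma ExD (f g : T -> R) : L1 f -> L1 g -> Ex P (fun x => f x + g x) = Ex P f + Ex P g.
Proof. by move=> Lf Lg; rewrite /Ex RintegralD. Qed.

Lemma ExZ (k : R) (f : T -> R) : L1 f -> Ex P (fun x => k * f x) = k * Ex P f.
Proof. by move=> Lf; rewrite /Ex RintegralZl. Qed.

Lemma Ex_cst (k : R) : Ex P (fun _ => k) = k.
Proof.
rewrite /Ex Rintegral_cst //.
by rewrite (_ : fine (P setT) = 1) ?mulr1 // probability_setT.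
Qed.

Lemma Ex_ge0 (f : T -> R) : (forall x, 0 <= f x) -> 0 <= Ex P f.
Proof. by move=> f0; apply: Rintegral_ge0 => x _. Qed.

Lemma eq_Ex (f g : T -> R) : f =1 g -> Ex P f = Ex P g.
Proof. by move=> fg; apply: eq_Rintegral => x _; rewrite fg. Qed.

Lemma Ex_mulr_cst (f : T -> R) (c : R) : L1 f -> Ex P (fun x => f x * c) = Ex P f * c.
Proof.
move=> Lf; rewrite (@eq_Ex _ (fun x => c * f x)) ?ExZ 1?mulrC //.
by move=> x; rewrite mulrC.
Qed.

Lemma Ex_mulDr (f g h : T -> R) : L2 f -> L2 g -> L2 h ->
  Ex P (fun x => f x * (g x + h x)) =
  Ex P (fun x => f x * g x) + Ex P (fun x => f x * h x).
Proof.
move=> Lf Lg Lh; rewrite -(ExD (sq_integrableM_integrable Lf Lg))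
  ?(sq_integrableM_integrable Lf Lh) //.
by apply: eq_Ex => x; rewrite mulrDr.
Qed.

Lemma Ex_sqrD (f g : T -> R) : L2 f -> L2 g ->
  Ex P (fun x => (f x + g x) ^+ 2) =
  Ex P (fun x => f x ^+ 2) + 2 * Ex P (fun x => f x * g x) + Ex P (fun x => g x ^+ 2).
Proof.
move=> Lf Lg; have L1fg := sq_integrableM_integrable Lf Lg.
rewrite -(ExZ 2 L1fg) -(ExD Lf.2 (EFin_integrableZ 2 L1fg)).
rewrite -(ExD (EFin_integrableD Lf.2 (EFin_integrableZ 2 L1fg)) Lg.2).
by apply: eq_Ex => x; rewrite sqrrD -[_ *+ 2]mulr_natl mulrA.
Qed.

Lemma Ex_dominated_cvg0 (k : nat -> T -> R) (g : T -> R) :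
  (forall n, measurable_fun setT (k n)) -> L1 g ->
  (forall n x, `|k n x| <= g x) -> (forall x, k ^~ x @ \oo --> 0) ->
  (fun n => Ex P (k n)) @ \oo --> 0.
Proof.
move=> mk Lg kg k0.
have [] := @dominated_convergence _ T R P setT measurableT
  (fun n => EFin \o k n) (cst 0%E) (EFin \o g).
- by move=> n; apply/measurable_EFinP.
- exact: measurable_cst.
- by apply: aeW => x _; apply/fine_cvgP; split; [exact: nearW|exact: k0].
- exact: Lg.
- by apply: aeW => x n _; rewrite /= lee_fin.
by move=> _ _; rewrite integral0 => /fine_cvg.
Qed.

End SquareIntegrable.

Section ImpactRatio.
Context (d : measure_display) (T : measurableType d) (R : realType)
        (P : probability T R).
Local Notation L2 := (sq_integrable P).
Local Notation ratio Y X δ := (Ex P (fun t => Y t * δ (X t)) / SD P (δ \o X)).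

Lemma SD_H0 (X : T -> R) (δ : R -> R) : H0 P X δ ->
  SD P (δ \o X) = Num.sqrt (Ex P (fun t => δ (X t) ^+ 2)).
Proof.
by move=> [_ [_ E0]]; rewrite /SD E0; congr Num.sqrt; apply: eq_Ex => t; rewrite subr0.
Qed.

Lemma Ex_sqr_H0 (X : T -> R) (δ : R -> R) : H0 P X δ ->
  Ex P (fun t => δ (X t) ^+ 2) = SD P (δ \o X) ^+ 2.
Proof. by move=> Hδ; rewrite (SD_H0 Hδ) sqr_sqrtr // Ex_ge0 // => t; exact: sqr_ge0. Qed.

Lemma H0_scale (X : T -> R) (δ : R -> R) (k : R) : H0 P X δ ->
  H0 P X (fun x => δ x / k).
Proof.
move=> [mδ [Lδ E0]]; split; first exact: measurable_funM.
have scaleE : (fun x => δ x / k) \o X = (fun t => k^-1 * (δ \o X) t).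
  by apply: funext => t; rewrite /= mulrC.
rewrite scaleE; split; first exact: sq_integrableZ.
by rewrite ExZ ?E0 ?mulr0 //; exact: sq_integrable_integrable.
Qed.

Lemma SD_scale (X : T -> R) (δ : R -> R) (k : R) : H0 P X δ -> 0 <= k ->
  SD P ((fun x => δ x / k) \o X) = SD P (δ \o X) / k.
Proof.
move=> Hδ k0; rewrite (SD_H0 (H0_scale k Hδ)) (SD_H0 Hδ).
rewrite (@eq_Ex _ _ _ P _ (fun t => k^-1 ^+ 2 * δ (X t) ^+ 2)); last first.
  by move=> t; rewrite mulrC exprMn.
rewrite ExZ; last exact: Hδ.2.1.2.
by rewrite sqrtrM ?sqr_ge0 // sqrtr_sqr ger0_norm ?invr_ge0 // mulrC.
Qed.

Lemma Ex_mul_scale (X Y : T -> R) (δ : R -> R) (k : R) : L2 Y -> H0 P X δ ->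
  Ex P (fun t => Y t * (δ (X t) / k)) = Ex P (fun t => Y t * δ (X t)) / k.
Proof.
move=> LY Hδ; rewrite (@eq_Ex _ _ _ P _ (fun t => k^-1 * (Y t * δ (X t)))).
  by rewrite ExZ 1?mulrC //; exact: sq_integrableM_integrable LY Hδ.2.1.
by move=> t; rewrite mulrA mulrC.
Qed.

Lemma ratio_scale (X Y : T -> R) (δ : R -> R) (k : R) : L2 Y -> H0 P X δ -> 0 < k ->
  ratio Y X (fun x => δ x / k) = ratio Y X δ.
Proof.
move=> LY Hδ k0; rewrite (Ex_mul_scale k LY Hδ) (SD_scale Hδ (ltW k0)).
have [->|sd0] := eqVneq (SD P (δ \o X)) 0; first by rewrite mul0r !invr0 !mulr0.
by field; rewrite sd0 gt_eqF.
Qed.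

Lemma mean_impactE (X Y : T -> R) : L2 Y ->
  mean_impact P X Y =
    ereal_sup [set (ratio Y X δ)%:E | δ in [set δ | H0 P X δ /\ 0 < SD P (δ \o X)]].
Proof.
move=> LY; rewrite /mean_impact; congr ereal_sup.
apply/seteqP; split => _ [δ [Hδ Eδ2] <-].
- have sd1 : SD P (δ \o X) = 1.
    by apply/eqP; rewrite -(sqrp_eq1 (sqrtr_ge0 _)) -Ex_sqr_H0 // Eδ2.
  by exists δ; [split; rewrite // sd1|rewrite sd1 divr1].
- exists (fun x => δ x / SD P (δ \o X)); last by rewrite /= Ex_mul_scale.
  split; first exact: H0_scale.
  by rewrite (Ex_sqr_H0 (H0_scale _ Hδ)) SD_scale ?divff ?expr1n ?gt_eqF ?ltW.
Qed.

End ImpactRatio.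

(* y + lower_excess n y = max(y, -(n+1)) *)
Definition lower_excess (R : realDomainType) (n : nat) (y : R) : R :=
  Num.max 0 (- n.+1%:R - y).

Lemma lower_excess_ge0 (R : realDomainType) n (y : R) : 0 <= lower_excess n y.
Proof. by rewrite le_max lexx. Qed.

Lemma lower_excess_le_norm (R : realDomainType) n (y : R) : lower_excess n y <= `|y|.
Proof.
rewrite ge_max normr_ge0 /=; have := ler_norm (- y); rewrite normrN.
by have : 0 <= n.+1%:R :> R by []; lra.
Qed.

Lemma lower_excess_lower_bound (R : realDomainType) n (y : R) :
  - n.+1%:R <= y + lower_excess n y.
Proof. by rewrite -lerBlDl le_max lexx orbT. Qed.

Lemma lower_excess_eventually0 (R : archiRealFieldType) (y : R) :
  \forall n \near \oo, lower_excess n y = 0.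
Proof.
exists (Num.bound `|y|) => // n /= boundn; apply/max_l.
have := archi_boundP (normr_ge0 y); have := ler_norm (- y); rewrite normrN.
have : (Num.bound `|y|)%:R < n.+1%:R :> R by rewrite ltr_nat ltnS.
lra.
Qed.

Lemma measurable_lower_excess (R : realType) n :
  measurable_fun setT (@lower_excess R n).
Proof. by apply: measurable_maxr => //; exact: measurable_funB. Qed.

Section CentredTruncation.
Context (d : measure_display) (T : measurableType d) (R : realType)
        (P : probability T R).
Local Notation L2 := (sq_integrable P).
Local Notation ratio Y X δ := (Ex P (fun t => Y t * δ (X t)) / SD P (δ \o X)).

Variables (X Y : T -> R) (δ : R -> R).
Hypotheses (LY : L2 Y) (Hδ : H0 P X δ).

Definition excess_mean n := Ex P (fun t => lower_excess n (δ (X t))).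

Definition centred_truncation n (y : R) := δ y + lower_excess n (δ y) - excess_mean n.

Let Lδ : L2 (δ \o X) := Hδ.2.1.
Let excess n t := lower_excess n (δ (X t)).

Let measurable_excess n : measurable_fun setT (excess n).
Proof. exact: measurableT_comp (measurable_lower_excess n) Lδ.1. Qed.

Let sq_integrable_excess n : L2 (excess n).
Proof.
apply: (sq_integrable_le (measurable_excess n) _ Lδ) => t.
by rewrite ger0_norm ?lower_excess_ge0 ?lower_excess_le_norm.
Qed.

Let excess_cvg0 (g : T -> R) t : (fun n => g t * excess n t) @ \oo --> 0.
Proof.
apply: cvg_near_cst; apply: filterS (lower_excess_eventually0 (δ (X t))) => n.
by rewrite /excess => ->; rewrite mulr0.
Qed.

Lemma Ex_mul_excess_cvg0 (g : T -> R) : L2 g ->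
  (fun n => Ex P (fun t => g t * excess n t)) @ \oo --> 0.
Proof.
move=> Lg; apply: (@Ex_dominated_cvg0 _ _ _ P _ (fun t => g t ^+ 2 + δ (X t) ^+ 2)).
- by move=> n; apply: measurable_funM; [exact: Lg.1|exact: measurable_excess].
- exact: EFin_integrableD Lg.2 Lδ.2.
- move=> n t; apply: le_trans (normM_le_sqrD (g t) (δ (X t))).
  by rewrite !normrM ler_wpM2l // ger0_norm ?lower_excess_ge0 ?lower_excess_le_norm.
- exact: excess_cvg0.
Qed.

Lemma Ex_sqr_excess_cvg0 : (fun n => Ex P (fun t => excess n t ^+ 2)) @ \oo --> 0.
Proof.
apply: (@Ex_dominated_cvg0 _ _ _ P _ (fun t => δ (X t) ^+ 2)).
- by move=> n; apply: measurable_funX; exact: measurable_excess.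
- exact: Lδ.2.
- move=> n t; rewrite ger0_norm ?sqr_ge0 // -(real_normK (num_real (δ (X t)))) !expr2.
  by apply: ler_pM; rewrite ?lower_excess_ge0 ?lower_excess_le_norm.
- move=> t; apply: cvg_near_cst.
  apply: filterS (lower_excess_eventually0 (δ (X t))) => n.
  by rewrite /excess => ->; rewrite expr0n.
Qed.

Lemma excess_mean_cvg0 : excess_mean @ \oo --> 0.
Proof.
rewrite (_ : excess_mean = fun n => Ex P (fun t => 1 * excess n t)).
  exact: Ex_mul_excess_cvg0 (sq_integrable_cst P 1).
by apply: funext => n; apply: eq_Ex => t; rewrite mul1r.
Qed.

Lemma excess_mean_ge0 n : 0 <= excess_mean n.
Proof. by apply: Ex_ge0 => t; exact: lower_excess_ge0. Qed.

Lemma centred_truncation_lower_bound n y :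
  - (n.+1%:R + excess_mean n) <= centred_truncation n y.
Proof. by rewrite opprD lerD2r lower_excess_lower_bound. Qed.

Lemma H0_centred_truncation n : H0 P X (centred_truncation n).
Proof.
split.
  apply: measurable_funB => //; apply: measurable_funD => //; first exact: Hδ.1.
  exact: measurableT_comp (measurable_lower_excess n) Hδ.1.
split; first exact: sq_integrableD (sq_integrableD Lδ (sq_integrable_excess n))
                                   (sq_integrable_cst P _).
have Eδ : Ex P (fun t => δ (X t)) = 0 := Hδ.2.2.
have Lh := sq_integrable_excess n.
rewrite /comp /centred_truncation ExD ?ExD ?Ex_cst ?Eδ ?add0r ?subrr //.
all: try exact: EFin_integrable_cst.
all: apply: sq_integrable_integrable => //; exact: sq_integrableD.
Qed.

Lemma Ex_mul_centred_truncation n :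
  Ex P (fun t => Y t * centred_truncation n (X t)) =
  Ex P (fun t => Y t * δ (X t)) + Ex P (fun t => Y t * excess n t)
  - excess_mean n * Ex P Y.
Proof.
have Lδ' : L2 (fun t => δ (X t)) := Lδ.
rewrite /centred_truncation (Ex_mulDr LY (sq_integrableD Lδ' (sq_integrable_excess n))
                                      (sq_integrable_cst P (- excess_mean n))).
rewrite (Ex_mulDr LY Lδ' (sq_integrable_excess n)).
by rewrite (Ex_mulr_cst _ (sq_integrable_integrable LY)) mulrN mulrC.
Qed.

Lemma Ex_sqr_centred_truncation n :
  Ex P (fun t => centred_truncation n (X t) ^+ 2) =
  Ex P (fun t => δ (X t) ^+ 2) + 2 * Ex P (fun t => δ (X t) * excess n t)
  + Ex P (fun t => excess n t ^+ 2) - excess_mean n ^+ 2.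
Proof.
have Lδ' : L2 (fun t => δ (X t)) := Lδ.
have Lδh := sq_integrableD Lδ' (sq_integrable_excess n).
have Eh : Ex P (excess n) = excess_mean n by [].
rewrite /centred_truncation (Ex_sqrD Lδh (sq_integrable_cst P (- excess_mean n))).
rewrite (Ex_sqrD Lδ' (sq_integrable_excess n)) Ex_cst.
rewrite (Ex_mulr_cst _ (sq_integrable_integrable Lδh)).
rewrite (ExD (sq_integrable_integrable Lδ')
              (sq_integrable_integrable (sq_integrable_excess n))).
by rewrite Hδ.2.2 Eh; ring.
Qed.

Lemma Ex_mul_centred_truncation_cvg :
  (fun n => Ex P (fun t => Y t * centred_truncation n (X t))) @ \oo -->
  Ex P (fun t => Y t * δ (X t)).
Proof.
rewrite (funext Ex_mul_centred_truncation).
have lim := cvgB (cvgD (cvg_cst (Ex P (fun t => Y t * δ (X t)))) (Ex_mul_excess_cvg0 LY))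
                 (cvgM excess_mean_cvg0 (cvg_cst (Ex P Y))).
by rewrite mul0r addr0 subr0 in lim; exact: lim.
Qed.

Lemma SD_centred_truncation_cvg :
  (fun n => SD P (centred_truncation n \o X)) @ \oo --> SD P (δ \o X).
Proof.
rewrite (funext (fun n => SD_H0 (H0_centred_truncation n))) (SD_H0 Hδ).
apply: continuous_cvg; first exact: sqrt_continuous.
rewrite (funext Ex_sqr_centred_truncation).
have Lδδ : L2 (fun t => δ (X t)) := Lδ.
have lim := cvgB (cvgD (cvgD (cvg_cst (Ex P (fun t => δ (X t) ^+ 2)))
                             (cvgM (cvg_cst (2 : R)) (Ex_mul_excess_cvg0 Lδδ)))
                       Ex_sqr_excess_cvg0)
                 (cvgM excess_mean_cvg0 excess_mean_cvg0).
by rewrite mulr0 mul0r !addr0 subr0 in lim; exact: lim.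
Qed.

Lemma bounded_below_ratio_approx (e : R) : 0 < SD P (δ \o X) -> 0 < e ->
  exists δ', [/\ H0 P X δ', 0 < SD P (δ' \o X), (forall t, -1 <= δ' (X t)) &
                 ratio Y X δ - e < ratio Y X δ'].
Proof.
move=> sd0 e0.
have ratio_cvg : (fun n => ratio Y X (centred_truncation n)) @ \oo --> ratio Y X δ.
  apply: cvgM; first exact: Ex_mul_centred_truncation_cvg.
  by apply: cvgV; [rewrite gt_eqF|exact: SD_centred_truncation_cvg].
have lt_ratio : ratio Y X δ - e < ratio Y X δ by rewrite ltrBlDr ltrDl.
have [n [/= sdn closen]] := filter_ex (filterI
  (cvgr_gt _ SD_centred_truncation_cvg _ sd0) (cvgr_gt _ ratio_cvg _ lt_ratio)).
pose k := n.+1%:R + excess_mean n.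
have k0 : 0 < k by apply: ltr_wpDr; [exact: excess_mean_ge0|].
exists (fun y => centred_truncation n y / k); split.
- exact: H0_scale (H0_centred_truncation n).
- by rewrite SD_scale ?ltW ?divr_gt0 //; exact: H0_centred_truncation.
- by move=> t; rewrite ler_pdivlMr // mulN1r centred_truncation_lower_bound.
- by rewrite ratio_scale //; exact: H0_centred_truncation.
Qed.

End CentredTruncation.

Theorem mainTheorem5 (d : measure_display) (T : measurableType d) (R : realType)
    (P : probability T R) (X Y : T -> R) :
  sq_integrable P X -> sq_integrable P Y ->
  mean_impact P X Y =
    ereal_sup [set (Ex P (fun t => Y t * delta (X t)) / SD P (delta \o X))%:E
              | delta in [set delta | H0 P X delta /\ 0 < SD P (delta \o X)]]
  /\
  mean_impact P X Y =
    ereal_sup [set (Ex P (fun t => Y t * delta (X t)) / SD P (delta \o X))%:E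
              | delta in [set delta | H0 P X delta /\ 0 < SD P (delta \o X)
                                      /\ {ae P, forall t, -1 <= delta (X t)}]].
Proof.
move=> _ LY; rewrite mean_impactE //; split => //.
apply/eqP; rewrite eq_le; apply/andP; split.
- apply: (ereal_sup_le_approx
    (r := fun δ => Ex P (fun t => Y t * δ (X t)) / SD P (δ \o X))).
  move=> δ e [Hδ sd0] e0.
  have [δ' [Hδ' sd0' lb close]] := bounded_below_ratio_approx LY Hδ sd0 e0.
  by exists δ' => //; do 2 split => //; exact: aeW.
- by apply: ereal_sup_le => _ [δ [Hδ [sd0 _]] <-]; exists δ.
Qed.
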